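(* Let $X$ and $Z$ be $T_1$-spaces with $\mathcal{D}(X)=\mathcal{D}(Z)$. Then $i(X)=i(Z)$. In particular, if $X$ is a $T_1$-space and no card of $X$ has an isolated point, then $X$ has no isolated point.
   Context: $i(X)$ denotes the cardinal number of isolated points of $X$. For a topological space $X$ and $x \in X$, the set $X\setminus\{x\}$ carries the subspace topology. A card of $X$ is a space homeomorphic to $X \setminus \{x\}$ for some $x \in X$. The deck of $X$ is $\mathcal{D}(X)=\{[X\setminus\{x\}]_\sim : x \in X\}$, where $[Y]_\sim$ denotes the homeomorphism class of $Y$. *)

From Stdlib Require Import Classical.

(* A topology on a type T, given by its family of open sets. The empty set
   is open as the union of the empty family. *)
Record topology (T : Type) := Topology {
  open : (T -> Prop) -> Prop;
  open_full : open (fun _ => True);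
  open_union : forall F : (T -> Prop) -> Prop,
      (forall U, F U -> open U) -> open (fun x => exists U, F U /\ U x);
  open_inter : forall U V, open U -> open V -> open (fun x => U x /\ V x)
}.
Arguments open {T} t U.

Definition T1 {T : Type} (t : topology T) : Prop :=
  forall x y : T, x <> y -> exists U, open t U /\ U x /\ ~ U y.

Definition subspace_open {T : Type} (t : topology T) (P : T -> Prop)
  (U : {x : T | P x} -> Prop) : Prop :=
  exists V, open t V /\ forall y, U y <-> V (proj1_sig y).

Lemma subspace_open_full {T} (t : topology T) P :
  subspace_open t P (fun _ => True).
Proof. exists (fun _ => True); split; [apply open_full | tauto]. Qed.

Lemma subspace_open_union {T} (t : topology T) P
  (F : ({x | P x} -> Prop) -> Prop) :
  (forall U, F U -> subspace_open t P U) ->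
  subspace_open t P (fun x => exists U, F U /\ U x).
Proof.
  intros HF.
  exists (fun x => exists W, (fun W => exists U, F U /\ open t W /\
            forall y, U y <-> W (proj1_sig y)) W /\ W x).
  split.
  - apply open_union. intros W [U [_ [HW _]]]; exact HW.
  - intros y; split.
    + intros [U [HU Uy]]. destruct (HF U HU) as [W [HW HUW]].
      exists W; split; [exists U; auto | apply HUW; exact Uy].
    + intros [W [[U [HU [_ HUW]]] Wy]]. exists U; split; [exact HU|apply HUW; exact Wy].
Qed.

Lemma subspace_open_inter {T} (t : topology T) P U V :
  subspace_open t P U -> subspace_open t P V ->
  subspace_open t P (fun x => U x /\ V x).
Proof.
  intros [U' [HU HUU]] [V' [HV HVV]].
  exists (fun x => U' x /\ V' x); split; [apply open_inter; auto|].
  intros y; rewrite HUU, HVV; tauto.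
Qed.

Definition subspace {T : Type} (t : topology T) (P : T -> Prop)
  : topology {x : T | P x} :=
  @Topology _ (subspace_open t P) (subspace_open_full t P)
    (subspace_open_union t P) (subspace_open_inter t P).

Definition continuous {A B : Type} (tA : topology A) (tB : topology B)
  (f : A -> B) : Prop :=
  forall V, open tB V -> open tA (fun a => V (f a)).

Definition homeomorphic {A B : Type} (tA : topology A) (tB : topology B)
  : Prop :=
  exists (f : A -> B) (g : B -> A),
    (forall a, g (f a) = a) /\ (forall b, f (g b) = b) /\
    continuous tA tB f /\ continuous tB tA g.

Definition card_space {T : Type} (t : topology T) (x : T)
  : topology {y : T | y <> x} := subspace t (fun y => y <> x).

(* D(X) = D(Z): the sets of homeomorphism classes of cards coincide. *)
Definition same_deck {X Z : Type} (tX : topology X) (tZ : topology Z)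
  : Prop :=
  (forall x : X, exists z : Z, homeomorphic (card_space tX x) (card_space tZ z)) /\
  (forall z : Z, exists x : X, homeomorphic (card_space tX x) (card_space tZ z)).

Definition isolated {T : Type} (t : topology T) (x : T) : Prop :=
  open t (fun y => y = x).

Definition equinumerous (A B : Type) : Prop :=
  exists (f : A -> B) (g : B -> A),
    (forall a, g (f a) = a) /\ (forall b, f (g b) = b).

Definition same_num_isolated {X Z : Type} (tX : topology X) (tZ : topology Z)
  : Prop :=
  equinumerous {x : X | isolated tX x} {z : Z | isolated tZ z}.

(* In a T1 space X, a point y <> x is isolated in the card X \ {x} exactly
   when it is isolated in X, and homeomorphisms preserve isolated points.
   Hence a homeomorphism between cards X \ {x} and Z \ {z} injects the
   isolated points of X other than x into the isolated points of Z other
   than z; sending x to z extends it to an injection of the isolated points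
   of X into those of Z, provided x is not isolated or z is isolated.
   Such a pair (x, z) exists whenever D(X) = D(Z): take a non-isolated x if
   there is one; otherwise X is discrete, and then so is Z, because every
   card of Z is a card of X.  By symmetry we get injections both ways, and
   the Cantor-Bernstein theorem of mathcomp-classical gives i(X) = i(Z).
   The second part of the theorem only needs the first observation: an
   isolated point x of X stays isolated in the card of any other point. *)

From mathcomp Require Import ssreflect ssrfun ssrbool boolp classical_sets.
From mathcomp Require Import cardinality.

Set Implicit Arguments.
Unset Strict Implicit.

Local Open Scope classical_set_scope.

Definition injects (A B : Type) : Prop := exists f : A -> B, injective f.

Lemma equinumerous_of_injects (A B : Type) :
  injects A B -> injects B A -> equinumerous A B.
Proof.
have setT_le (S T : Type) : injects S T -> ([set: S] #<= [set: T])%card.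
  case=> h h_inj; rewrite -(card_le_eql (inj_card_eq (in2W h_inj))).
  exact: card_leT.
move=> /setT_le AB /setT_le BA.
have /card_bijP[h [k hK kK]] := Cantor_Bernstein AB BA.
have sub_eta (T : Type) (u : set_type [set: T]) : u = exist _ (sval u) (in_setT _).
  by case: u => a p; congr exist; exact: Prop_irrelevance.
exists (fun a => sval (h (exist _ a (in_setT a)))).
exists (fun b => sval (k (exist _ b (in_setT b)))).
by split=> [a|b]; rewrite -sub_eta ?hK ?kK.
Qed.

Lemma proj1_sig_inj (T : Type) (P : T -> Prop) : injective (@proj1_sig T P).
Proof. by case=> a pa [b pb] /= eab; subst b; congr exist; exact: Prop_irrelevance. Qed.

Lemma open_ext (T : Type) (t : topology T) (U V : T -> Prop) :
  (forall a, U a <-> V a) -> open t U -> open t V.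
Proof. by move=> UV; have -> : U = V by apply/funext => a; apply/propext. Qed.

Lemma isolated_in_card (T : Type) (t : topology T) (x : T) (y : {y | y <> x}) :
  isolated t (sval y) -> isolated (card_space t x) y.
Proof.
move=> iso_y; exists (fun w => w = sval y); split=> // w.
by split=> [->|/proj1_sig_inj].
Qed.

(* Conversely, in a T1 space an isolated point of a card is isolated in X:
   intersect its witness open set with an open set avoiding x. *)
Lemma isolated_of_card (T : Type) (t : topology T) (x : T) (y : {y | y <> x}) :
  T1 t -> isolated (card_space t x) y -> isolated t (sval y).
Proof.
case: y => y ne_yx /= t1 [V [oV Vy]].
have [U [oU [Uy nUx]]] := t1 y x ne_yx.
apply: (open_ext (U := fun w => V w /\ U w)); last exact: open_inter.
move=> w; split=> [[Vw Uw] | ->]; last by split=> //; apply/(Vy (exist _ y ne_yx)).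
have ne_wx : w <> x by move=> ewx; subst w.
by have /(f_equal sval) := proj2 (Vy (exist _ w ne_wx)) Vw.
Qed.

(* A bijection with continuous inverse maps isolated points to isolated
   points: the preimage under the inverse of {a} is {f a}. *)
Lemma homeo_isolated (A B : Type) (tA : topology A) (tB : topology B)
    (f : A -> B) (g : B -> A) :
  cancel f g -> cancel g f -> continuous tB tA g ->
  forall a, isolated tA a -> isolated tB (f a).
Proof.
move=> fK gK g_cont a iso_a.
apply: (open_ext _ (g_cont _ iso_a)) => b /=.
by split=> [<- | ->].
Qed.

Lemma card_homeo_isolated (X Z : Type) (tX : topology X) (tZ : topology Z)
    (x : X) (z : Z) :
  T1 tZ -> homeomorphic (card_space tX x) (card_space tZ z) ->
  exists phi : {y | y <> x} -> {w | w <> z}, injective phi /\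
    forall y, isolated tX (sval y) -> isolated tZ (sval (phi y)).
Proof.
move=> t1Z [f [g [fK [gK [_ g_cont]]]]]; exists f; split; first exact: can_inj fK.
move=> y iso_y; apply: isolated_of_card t1Z _.
exact: homeo_isolated fK gK g_cont _ (isolated_in_card iso_y).
Qed.

Lemma card_of_discrete (X Z : Type) (tX : topology X) (tZ : topology Z)
    (x : X) (z : Z) :
  T1 tZ -> (forall y, isolated tX y) ->
  homeomorphic (card_space tX x) (card_space tZ z) ->
  forall w, w <> z -> isolated tZ w.
Proof.
move=> t1Z discrX [f [g [fK [gK [_ g_cont]]]]] w ne_wz.
pose w' : {w | w <> z} := exist _ w ne_wz.
apply: (isolated_of_card (y := w') t1Z); rewrite -(gK w').
exact/(homeo_isolated fK gK g_cont)/isolated_in_card/discrX.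
Qed.

(* If X is discrete and every card of Z is a card of X, then Z is discrete:
   each point of Z is isolated in the card of any other point, and a
   one-point space is discrete. *)
Lemma deck_of_discrete (X Z : Type) (tX : topology X) (tZ : topology Z) :
  T1 tZ -> (forall y, isolated tX y) ->
  (forall w, exists y, homeomorphic (card_space tX y) (card_space tZ w)) ->
  forall z, isolated tZ z.
Proof.
move=> t1Z discrX deckZ z.
have [[z1 ne_z1z] | single] := pselect (exists z1, z1 <> z).
  have [y h] := deckZ z1.
  by apply: card_of_discrete t1Z discrX h _ _ => ez; apply: ne_z1z.
apply: (open_ext (U := fun _ => True)); last exact: open_full.
by move=> w; split=> // _; apply: contrapT => ne_wz; apply: single; exists w.
Qed.

Section ExtendAtPoint.
Variables (X Z : Type) (x : X) (z : Z) (phi : {y | y <> x} -> {w | w <> z}).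

Definition extend_at (y : X) : Z :=
  if pselect (y = x) is right ne then sval (phi (exist _ y ne)) else z.

Lemma extend_at_inj : injective phi -> injective extend_at.
Proof.
rewrite /extend_at => phi_inj y y'.
case: pselect => [->|ne]; case: pselect => [->|ne'] //.
- by move=> ez; have := svalP (phi (exist _ y' ne')); rewrite -ez.
- by move=> ez; have := svalP (phi (exist _ y ne)); rewrite ez.
by move=> /proj1_sig_inj/phi_inj/(f_equal sval).
Qed.

Lemma extend_at_maps (P : X -> Prop) (Q : Z -> Prop) :
  (forall y, P (sval y) -> Q (sval (phi y))) -> (P x -> Q z) ->
  forall y, P y -> Q (extend_at y).
Proof. by rewrite /extend_at => PQ PQx y; case: pselect => [->|ne] // /(PQ (exist _ y ne)). Qed.

End ExtendAtPoint.

Lemma injects_restrict (X Z : Type) (P : X -> Prop) (Q : Z -> Prop) (psi : X -> Z) :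
  injective psi -> (forall y, P y -> Q (psi y)) -> injects {y | P y} {w | Q w}.
Proof.
move=> psi_inj PQ; exists (fun y => exist Q (psi (sval y)) (PQ _ (svalP y))).
by move=> y y' /(f_equal sval) /psi_inj /proj1_sig_inj.
Qed.

Lemma injects_of_card_homeo (X Z : Type) (tX : topology X) (tZ : topology Z)
    (x : X) (z : Z) :
  T1 tZ -> homeomorphic (card_space tX x) (card_space tZ z) ->
  (isolated tX x -> isolated tZ z) ->
  injects {y | isolated tX y} {w | isolated tZ w}.
Proof.
move=> t1Z h iso_xz; have [phi [phi_inj phi_iso]] := card_homeo_isolated t1Z h.
exact: injects_restrict (extend_at_inj phi_inj) (extend_at_maps phi_iso iso_xz).
Qed.

Lemma same_deck_sym (X Z : Type) (tX : topology X) (tZ : topology Z) :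
  same_deck tX tZ -> same_deck tZ tX.
Proof.
have homeo_sym (A B : Type) (tA : topology A) (tB : topology B) :
    homeomorphic tA tB -> homeomorphic tB tA.
  by case=> f [g [fK [gK [f_cont g_cont]]]]; exists g, f.
case=> XZ ZX; split=> [z|x]; [have [x h] := ZX z | have [z h] := XZ x].
all: by eexists; apply: homeo_sym h.
Qed.

Lemma isolated_injects (X Z : Type) (tX : topology X) (tZ : topology Z) :
  T1 tZ -> same_deck tX tZ -> injects {x | isolated tX x} {z | isolated tZ z}.
Proof.
move=> t1Z [XZ ZX].
have [[x not_iso_x] | discr] := pselect (exists x, ~ isolated tX x).
  have [z h] := XZ x; exact: injects_of_card_homeo t1Z h (fun iso_x => False_ind _ (not_iso_x iso_x)).
have discrX y : isolated tX y by apply: contrapT => ?; apply: discr; exists y.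
have discrZ := deck_of_discrete t1Z discrX ZX.
have [[x0] | emptyX] := pselect (inhabited X).
  have [z0 h] := XZ x0; exact: injects_of_card_homeo t1Z h (fun _ => discrZ z0).
by exists (fun a => match emptyX (inhabits (sval a)) with end) => a;
  case: (emptyX (inhabits (sval a))).
Qed.

Lemma isolated_in_some_card (T : Type) (t : topology T) (x : T) :
  (exists x1 x2 : T, x1 <> x2) -> isolated t x ->
  exists (c : T) (y : {y | y <> c}), isolated (card_space t c) y.
Proof.
move=> [x1 [x2 ne12]] iso_x.
have [c ne_xc] : exists c, x <> c.
  by have [->|] := pselect (x = x1); [exists x2 | exists x1].
by exists c, (exist _ x ne_xc); exact: isolated_in_card.
Qed.

Theorem theorem4p3 :
  (forall (X Z : Type) (tX : topology X) (tZ : topology Z),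
      T1 tX -> T1 tZ -> same_deck tX tZ -> same_num_isolated tX tZ) /\
  (forall (X : Type) (tX : topology X),
      T1 tX ->
      (exists x1 x2 : X, x1 <> x2) ->
      (forall (x : X) (y : {y : X | y <> x}), ~ isolated (card_space tX x) y) ->
      forall x : X, ~ isolated tX x).
Proof.
split.
- move=> X Z tX tZ t1X t1Z deck.
  apply: equinumerous_of_injects; first exact: isolated_injects t1Z deck.
  exact: isolated_injects t1X (same_deck_sym deck).
- move=> X tX _ two_points no_card_iso x iso_x.
  have [c [y iso_y]] := isolated_in_some_card two_points iso_x.
  exact: no_card_iso c y iso_y.
Qed.
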